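(* In Setting U, let $(\pi_i)$ be a positive numerical steady state, and suppose there is a constant $C_P>0$ such that for every real vector $(u_i)$ with $\sum_iu_i\pi_i|C_i|=0$, $$\sum_iu_i^2\pi_i|C_i|\le C_P\sum_{i,j}\frac{|\Gamma_{ij}|(\pi_i+\pi_j)}{|\mathbf y_i-\mathbf y_j|}(u_i-u_j)^2 .$$ Let $\rho(t)$ solve the upwind scheme with $\sum_i\rho_i(0)|C_i|=\sum_i\pi_i|C_i|$. Then for all $t\ge0$, $$\sum_i\frac{(\rho_i(t)-\pi_i)^2}{\pi_i}|C_i|\le e^{-\frac{D}{2C_P}t}\sum_i\frac{(\rho_i(0)-\pi_i)^2}{\pi_i}|C_i| .$$
   Context: Setting U: Let $\mathcal N\subset\mathbb R^\ell$ be a smooth compact connected $d$-dimensional submanifold without boundary, with geodesic distance $d_{\mathcal N}$. Let $\mathbf y_1,\dots,\mathbf y_n\in\mathcal N$ be distinct points with Voronoi cells $C_i:=\{\mathbf y\in\mathcal N: d_{\mathcal N}(\mathbf y,\mathbf y_i)\le d_{\mathcal N}(\mathbf y,\mathbf y_j)\ \forall j\}$, volumes $|C_i|:=\mathcal H^d(C_i)>0$, faces $\Gamma_{ij}:=C_i\cap C_j$ with $|\Gamma_{ij}|:=\mathcal H^{d-1}(\Gamma_{ij})$ ($|\Gamma_{ii}|:=0$), and neighbor sets $VF(i):=\{j\ne i:\Gamma_{ij}\ne\emptyset\}$; assume $|\Gamma_{ij}|>0$ for $j\in VF(i)$ and that the graph with edges $\{i,j\}$, $j\in VF(i)$, is connected.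 $|\mathbf y_j-\mathbf y_i|$ is the Euclidean distance in $\mathbb R^\ell$. Let $D>0$ be a constant and $\vec b$ a smooth tangent vector field on $\mathcal N$. For $j\in VF(i)$, $\vec n_{ij}$ is the unit normal to $\Gamma_{ij}$ (tangent to $\mathcal N$) pointing from $C_i$ into $C_j$, and $(\vec b\cdot\vec n)_{ij}$ is the value of $\vec b\cdot\vec n_{ij}$ at the point where the minimizing geodesic from $\mathbf y_i$ to $\mathbf y_j$ meets $\Gamma_{ij}$, so that $(\vec b\cdot\vec n)_{ji}=-(\vec b\cdot\vec n)_{ij}$. For real $x$, $x^+:=\max(x,0)$, $x^-:=\max(-x,0)$. Define $Q_{ij}:=\frac{|\Gamma_{ij}|}{|C_i|}\big(\frac{D}{|\mathbf y_j-\mathbf y_i|}+(\vec b\cdot\vec n)^+_{ij}\big)$ for $j\in VF(i)$, $Q_{ij}:=0$ for $j\notin VF(i)\cup\{i\}$, and $Q_{ii}:=-\sum_{j\ne i}Q_{ij}$. The upwind scheme is the ODE system $\frac{\mathrm d}{\mathrm dt}(\rho_i|C_i|)=\sum_{j\in VF(i)}|\Gamma_{ij}|\big(\frac{D(\rho_j-\rho_i)}{|\mathbf y_j-\mathbf y_i|}+(\vec b\cdot\vec n)^-_{ij}\rho_j-(\vec b\cdot\vec n)^+_{ij}\rho_i\big)$, $i=1,\dots,n$, equivalently $\frac{\mathrm d}{\mathrm dt}(\rho_i|C_i|)=\sum_jQ_{ji}\rho_j|C_j|$. A numerical steady state is a vector $(\pi_i)$ with $\sum_jQ_{ji}\pi_j|C_j|=0$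 for all $i$. *)

From HB Require Import structures.
From mathcomp Require Import all_boot all_order all_algebra.
From mathcomp Require Import all_classical all_reals all_analysis.
Set Implicit Arguments. Unset Strict Implicit. Unset Printing Implicit Defensive.
Import Order.TTheory GRing.Theory Num.Theory.
Local Open Scope ring_scope.

(* Discrete data of Setting U (Voronoi tessellation of a manifold), abstracted:
   n cells indexed by 'I_n, generator points y i in R^l,
   vol i = |C_i|, gam i j = |Gamma_ij|, nb i j <-> j \in VF(i),
   bn i j = (b . n)_ij. *)

Definition eucl_dist (R : realType) (l : nat) (y : 'I_l -> R) (z : 'I_l -> R) : R :=
  Num.sqrt (\sum_(k < l) (y k - z k) ^+ 2).

Definition posp (R : realType) (x : R) : R := Num.max x 0.
Definition negp (R : realType) (x : R) : R := Num.max (- x) 0.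

Definition Qoff (R : realType) (n l : nat) (y : 'I_n -> 'I_l -> R)
  (vol : 'I_n -> R) (gam : 'I_n -> 'I_n -> R) (nb : rel 'I_n)
  (bn : 'I_n -> 'I_n -> R) (D : R) (i j : 'I_n) : R :=
  if nb i j then gam i j / vol i * (D / eucl_dist (y j) (y i) + posp (bn i j)) else 0.

Definition Qmat (R : realType) (n l : nat) (y : 'I_n -> 'I_l -> R)
  (vol : 'I_n -> R) (gam : 'I_n -> 'I_n -> R) (nb : rel 'I_n)
  (bn : 'I_n -> 'I_n -> R) (D : R) (i j : 'I_n) : R :=
  if i == j then - \sum_(k | k != i) Qoff y vol gam nb bn D i k
  else Qoff y vol gam nb bn D i j.

Definition upwind_rhs (R : realType) (n l : nat) (y : 'I_n -> 'I_l -> R)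
  (gam : 'I_n -> 'I_n -> R) (nb : rel 'I_n)
  (bn : 'I_n -> 'I_n -> R) (D : R) (rho : 'I_n -> R) (i : 'I_n) : R :=
  \sum_(j | nb i j) gam i j *
     (D * (rho j - rho i) / eucl_dist (y j) (y i) + negp (bn i j) * rho j
      - posp (bn i j) * rho i).

Definition steady_state (R : realType) (n l : nat) (y : 'I_n -> 'I_l -> R)
  (vol : 'I_n -> R) (gam : 'I_n -> 'I_n -> R) (nb : rel 'I_n)
  (bn : 'I_n -> 'I_n -> R) (D : R) (pi : 'I_n -> R) : Prop :=
  forall i, \sum_j Qmat y vol gam nb bn D j i * pi j * vol j = 0.

From HB Require Import structures.
From mathcomp Require Import all_boot all_order all_algebra.
From mathcomp Require Import all_classical all_reals all_analysis.
From mathcomp Require Import ring lra.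
Set Implicit Arguments. Unset Strict Implicit. Unset Printing Implicit Defensive.
Import Order.TTheory GRing.Theory Num.Theory.
Local Open Scope ring_scope.

(* Write w_i = pi_i |C_i| and u_i = rho_i / pi_i - 1 for the relative
   deviation of a state rho from the steady state pi.  The scheme is put in
   conservative flux form with the rates q_ij = Q_ij; the steady-state
   balance sum_j q_ji w_j = sum_j q_ij w_i then yields the discrete
   dissipation identity
     d/dt E = - sum_ij q_ij w_i (u_i - u_j)^2,   E = sum_i u_i^2 pi_i |C_i|.
   Since q_ij w_i >= D |Gamma_ij| pi_i / |y_i - y_j| and the mass is
   conserved (so the mean of u vanishes), the Poincare inequality bounds the
   dissipation by -(D / 2C_P) E, and a Gronwall argument concludes. *)

Section Calculus.
Variable R : realType.

Lemma is_derive_fsum (n : nat) (h : 'I_n -> R -> R) (x : R) (dh : 'I_n -> R) :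
  (forall i, is_derive x 1 (h i) (dh i)) ->
  is_derive x 1 (fun s => \sum_i h i s) (\sum_i dh i).
Proof.
move=> hd; have := is_derive_sum hd.
suff -> : \sum_(i < n) h i = (fun s => \sum_i h i s) by [].
by apply/funext => s; rewrite fct_sumE.
Qed.

Lemma le_deriv_le0 (g dg : R -> R) :
  (forall s : R, 0 <= s -> is_derive s 1 g (dg s)) ->
  (forall s : R, 0 <= s -> dg s <= 0) -> forall t : R, 0 <= t -> g t <= g 0.
Proof.
move=> hd hle t t0.
have der : forall x, x \in `]0, t[ -> is_derive x 1 g (dg x).
  by move=> x /andP[/ltW x0 _]; exact: hd.
have cont := derivable_within_continuous
  (fun x (xin : x \in `[0, t]) => @ex_derive _ _ _ _ _ _ _ (hd x (andP xin).1)).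
have [c /[1!in_itv] /andP[c0 _] mvt] := MVT_segment t0 der cont.
rewrite -subr_le0 mvt subr0; apply: mulr_le0_ge0 => //; exact: hle.
Qed.

Lemma deriv0_const (g : R -> R) :
  (forall s : R, 0 <= s -> is_derive s 1 g 0) -> forall t : R, 0 <= t -> g t = g 0.
Proof.
move=> hd t t0; apply/eqP; rewrite eq_le.
rewrite (le_deriv_le0 hd (fun _ _ => lexx 0)) //= -lerN2.
apply: (@le_deriv_le0 (fun s => - g s) (fun=> 0)) => // s s0.
by have := is_deriveN (hd s s0); rewrite oppr0.
Qed.

(* Gronwall: if E' <= -c E on [0, +oo), then E t <= exp(-c t) E 0, because
   s |-> exp(c s) E s has nonpositive derivative. *)
Lemma gronwall_exp (E dE : R -> R) (c : R) :
  (forall s : R, 0 <= s -> is_derive s 1 E (dE s)) ->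
  (forall s : R, 0 <= s -> dE s <= - c * E s) ->
  forall t : R, 0 <= t -> E t <= expR (- c * t) * E 0.
Proof.
move=> hE hbound t t0.
have hlin (s : R) : is_derive s 1 (fun x => c * x) c.
  have := @is_deriveZ _ _ _ id c s 1 1 (is_derive_id s 1).
  by rewrite /GRing.scale /= mulr1.
have hg (s : R) : 0 <= s -> is_derive s 1 (fun x => expR (c * x) * E x)
                (expR (c * s) * dE s + E s * (expR (c * s) * c)).
  move=> s0; have hexp := is_derive1_comp (is_derive_expR (c * s)) (hlin s).
  exact: is_deriveM hexp (hE s s0).
have dg_le0 (s : R) : 0 <= s -> expR (c * s) * dE s + E s * (expR (c * s) * c) <= 0.
  move=> s0; have -> : expR (c * s) * dE s + E s * (expR (c * s) * c) =
     expR (c * s) * (dE s + c * E s) by ring.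
  apply: mulr_ge0_le0; first exact/ltW/expR_gt0.
  by rewrite -lerBrDr sub0r -mulNr; exact: hbound.
have := le_deriv_le0 hg dg_le0 t0; rewrite mulr0 expR0 mul1r => hgt.
have -> : E t = expR (- c * t) * (expR (c * t) * E t).
  by rewrite mulrA -expRD mulNr addNr expR0 mul1r.
by apply: ler_wpM2l => //; exact/ltW/expR_gt0.
Qed.

Lemma is_derive_sqdev (a : R -> R) (w da x : R) :
  is_derive x 1 a da ->
  is_derive x 1 (fun s => (a s - w) ^+ 2 / w) (2 * (a x - w) / w * da).
Proof.
move=> ha.
have hb : is_derive x 1 (fun s => a s - w) da.
  by have := is_deriveB ha (is_derive_cst w x 1); rewrite subr0.
have hsq := @is_deriveX _ _ (fun s => a s - w) 2 x 1 da hb.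
have hM := @is_deriveM _ _ (fun s => (a s - w) ^+ 2) (cst w^-1) x 1 _ 0 hsq
  (is_derive_cst _ _ _).
have hdiv : is_derive x 1 (fun s => (a s - w) ^+ 2 / w) _ := hM.
apply: (is_derive_eq hdiv).
by rewrite /= scaler0 add0r /GRing.scale /= expr1; ring.
Qed.

Lemma is_derive_chi2 (a : R -> R) (p v da x : R) :
  p != 0 -> v != 0 -> is_derive x 1 (fun s => a s * v) da ->
  is_derive x 1 (fun s => (a s - p) ^+ 2 / p * v) (2 * (a x - p) / p * da).
Proof.
move=> p0 v0 hav; have := is_derive_sqdev (p * v) hav.
have -> : (fun s => (a s * v - p * v) ^+ 2 / (p * v)) =
          (fun s => (a s - p) ^+ 2 / p * v).
  by apply/funext => s; field; apply/andP.
have -> // : 2 * (a x * v - p * v) / (p * v) = 2 * (a x - p) / p.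
by field; apply/andP.
Qed.

End Calculus.

Section Generator.
Variables (R : realType) (n : nat) (q : 'I_n -> 'I_n -> R).

Lemma net_flux_sum0 (v : 'I_n -> R) :
  \sum_i \sum_j (q j i * v j - q i j * v i) = 0.
Proof. by under eq_bigr do rewrite sumrB; rewrite sumrB exchange_big subrr. Qed.

Lemma dirichlet_identity (w u : 'I_n -> R) :
  (forall i, \sum_j q j i * w j = \sum_j q i j * w i) ->
  2 * \sum_i u i * \sum_j (q j i * (w j + w j * u j) - q i j * (w i + w i * u i))
  = - \sum_i \sum_j q i j * w i * (u i - u j) ^+ 2.
Proof.
move=> balance.
set A := \sum_i \sum_j q i j * w i * u i ^+ 2.
set B := \sum_i \sum_j q i j * w i * u i * u j.
have cross : \sum_i u i * \sum_j (q j i * (w j + w j * u j)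
                                   - q i j * (w i + w i * u i)) = B - A.
  rewrite /A /B [X in _ = X - _]exchange_big /= -sumrB; apply: eq_bigr => i _.
  transitivity (u i * (\sum_j q j i * w j - \sum_j q i j * w i) +
    \sum_j (q j i * w j * u j * u i - q i j * w i * u i ^+ 2)).
    by rewrite -sumrB !mulr_sumr -big_split /=; apply: eq_bigr => j _; ring.
  by rewrite balance subrr mulr0 add0r sumrB.
have swapped : \sum_i \sum_j q i j * w i * u j ^+ 2 = A.
  rewrite exchange_big /=; apply: eq_bigr => j _.
  transitivity (u j ^+ 2 * \sum_i q i j * w i).
    by rewrite mulr_sumr; apply: eq_bigr => i _; ring.
  by rewrite balance mulr_sumr; apply: eq_bigr => i _; ring.
have expand : \sum_i \sum_j q i j * w i * (u i - u j) ^+ 2 =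
  A - 2 * B + \sum_i \sum_j q i j * w i * u j ^+ 2.
  rewrite /A /B mulr_sumr -!sumrB -big_split /=; apply: eq_bigr => i _.
  by rewrite mulr_sumr -!sumrB -big_split /=; apply: eq_bigr => j _; ring.
by rewrite cross expand swapped; ring.
Qed.

End Generator.

Lemma eucl_distC (R : realType) (l : nat) (a b : 'I_l -> R) :
  eucl_dist a b = eucl_dist b a.
Proof.
by rewrite /eucl_dist; congr Num.sqrt; apply: eq_bigr => k _; rewrite -sqrrN opprB.
Qed.

Section Upwind.
Variables (R : realType) (n l : nat) (y : 'I_n -> 'I_l -> R) (vol : 'I_n -> R)
  (gam : 'I_n -> 'I_n -> R) (nb : rel 'I_n) (bn : 'I_n -> 'I_n -> R)
  (D CP : R) (pi : 'I_n -> R).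
Hypothesis hvol : forall i, 0 < vol i.
Hypothesis hnb_irr : forall i, ~~ nb i i.
Hypothesis hnb_sym : forall i j, nb i j = nb j i.
Hypothesis hgam_sym : forall i j, gam i j = gam j i.
Hypothesis hgam_pos : forall i j, nb i j -> 0 < gam i j.
Hypothesis hgam_0 : forall i j, ~~ nb i j -> gam i j = 0.
Hypothesis hbn : forall i j, nb i j -> bn j i = - bn i j.
Hypothesis hD : 0 < D.
Hypothesis hpi : forall i, 0 < pi i.
Hypothesis hss : steady_state y vol gam nb bn D pi.
Hypothesis hCP : 0 < CP.
Hypothesis hP : forall u : 'I_n -> R, \sum_i u i * pi i * vol i = 0 ->
  \sum_i u i ^+ 2 * pi i * vol i <=
    CP * \sum_i \sum_j gam i j * (pi i + pi j) / eucl_dist (y i) (y j)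
                         * (u i - u j) ^+ 2.

Local Notation q := (Qoff y vol gam nb bn D).
Local Notation rhs := (upwind_rhs y gam nb bn D).

Definition weight (i : 'I_n) : R := pi i * vol i.
Definition rel_dev (r : 'I_n -> R) (i : 'I_n) : R := r i / pi i - 1.

Lemma rel_devE (r : 'I_n -> R) i : r i * vol i = weight i + weight i * rel_dev r i.
Proof. by rewrite /weight /rel_dev; field; exact: lt0r_neq0. Qed.

Lemma upwind_rhs_flux (r : 'I_n -> R) i :
  rhs r i = \sum_j (q j i * (r j * vol j) - q i j * (r i * vol i)).
Proof.
rewrite /upwind_rhs [RHS](bigID (nb i)) /= [X in _ = _ + X]big1 ?addr0; last first.
  by move=> j /negbTE nij; rewrite /Qoff nij hnb_sym nij; ring.
apply: eq_bigr => j nij.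
rewrite /Qoff nij -hnb_sym nij (hbn nij) (hgam_sym j i) (eucl_distC (y i)) /negp /posp.
move: (eucl_dist (y j) (y i))^-1 => k.
by field; apply/andP; split; exact/lt0r_neq0/hvol.
Qed.

Lemma upwind_mass_conservation (r : 'I_n -> R) : \sum_i rhs r i = 0.
Proof. by under eq_bigr do rewrite upwind_rhs_flux; exact: net_flux_sum0. Qed.

Lemma steady_state_balance i :
  \sum_j q j i * weight j = \sum_j q i j * weight i.
Proof.
have q0 k : q k k = 0 by rewrite /Qoff (negbTE (hnb_irr k)).
have := hss i; rewrite (bigD1 i) //= /Qmat eqxx.
under eq_bigr => j hj do rewrite (negbTE hj).
move/eqP; rewrite addrC addr_eq0 => /eqP balance.
rewrite [LHS](bigD1 i) //= [RHS](bigD1 i) //= !q0 mul0r !add0r -mulr_suml.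
under eq_bigr do rewrite /weight mulrA.
by rewrite balance !mulNr opprK /weight mulrA.
Qed.

(* The rate q_ij w_i dominates the pure diffusion rate D |Gamma_ij| pi_i / d_ij,
   the upwind advection contribution being nonnegative. *)
Lemma diffusion_le_rate (i j : 'I_n) :
  D * (gam i j * pi i / eucl_dist (y i) (y j)) <= q i j * weight i.
Proof.
rewrite /Qoff; case: ifP => nij; last by rewrite hgam_0 ?nij // !mul0r mulr0.
rewrite (eucl_distC (y j)) -subr_ge0.
have -> : gam i j / vol i * (D / eucl_dist (y i) (y j) + posp (bn i j)) * weight i
    - D * (gam i j * pi i / eucl_dist (y i) (y j)) = gam i j * pi i * posp (bn i j).
  rewrite /weight; move: (eucl_dist (y i) (y j))^-1 => k.
  by field; exact/lt0r_neq0/hvol.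
apply: mulr_ge0; last by rewrite le_max lexx orbT.
by rewrite mulr_ge0 // ltW // hgam_pos.
Qed.

Lemma poincare_form_le_dissipation (u : 'I_n -> R) :
  D * \sum_i \sum_j gam i j * (pi i + pi j) / eucl_dist (y i) (y j) * (u i - u j) ^+ 2
  <= 2 * \sum_i \sum_j q i j * weight i * (u i - u j) ^+ 2.
Proof.
set T := \sum_i \sum_j gam i j * pi i / eucl_dist (y i) (y j) * (u i - u j) ^+ 2.
have mirror : \sum_i \sum_j gam i j * pi j / eucl_dist (y i) (y j) * (u i - u j) ^+ 2 = T.
  rewrite exchange_big /=; apply: eq_bigr => i _; apply: eq_bigr => j _.
  by rewrite hgam_sym (eucl_distC (y j)) -sqrrN opprB.
have -> : \sum_i \sum_j gam i j * (pi i + pi j) / eucl_dist (y i) (y j) * (u i - u j) ^+ 2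
          = 2 * T.
  rewrite mulr2n mulrDl mul1r -{2}mirror /T -big_split; apply: eq_bigr => i _.
  by rewrite -big_split; apply: eq_bigr => j _ /=; ring.
rewrite mulrCA ler_wpM2l // /T mulr_sumr; apply: ler_sum => i _.
rewrite mulr_sumr; apply: ler_sum => j _.
by rewrite mulrA ler_wpM2r ?sqr_ge0 // diffusion_le_rate.
Qed.

Lemma chi2_dissipation (r : 'I_n -> R) :
  \sum_i r i * vol i = \sum_i pi i * vol i ->
  \sum_i 2 * (r i - pi i) / pi i * rhs r i <=
    - (D / (2 * CP)) * \sum_i (r i - pi i) ^+ 2 / pi i * vol i.
Proof.
move=> mass; set u := rel_dev r.
have pi0 i : pi i != 0 by exact: lt0r_neq0.
have dissipation : \sum_i 2 * (r i - pi i) / pi i * rhs r i =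
    - \sum_i \sum_j q i j * weight i * (u i - u j) ^+ 2.
  rewrite -(dirichlet_identity u steady_state_balance) mulr_sumr.
  apply: eq_bigr => i _; rewrite upwind_rhs_flux.
  under [in RHS]eq_bigr do rewrite -!rel_devE.
  by rewrite /u /rel_dev; field.
have energy : \sum_i (r i - pi i) ^+ 2 / pi i * vol i = \sum_i u i ^+ 2 * pi i * vol i.
  by apply: eq_bigr => i _; rewrite /u /rel_dev; field.
have mean0 : \sum_i u i * pi i * vol i = 0.
  transitivity (\sum_i (r i * vol i - pi i * vol i)); last by rewrite sumrB mass subrr.
  by apply: eq_bigr => i _; rewrite /u /rel_dev; field.
rewrite dissipation energy mulNr lerN2.
have := poincare_form_le_dissipation u.
have := hP mean0; set F := \sum_i \sum_j _; set G := \sum_i \sum_j _ => hPu hFG.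
have c0 : 0 <= D / (2 * CP) by rewrite ltW ?divr_gt0 ?mulr_gt0.
apply: le_trans (ler_wpM2l c0 hPu) _.
have -> : D / (2 * CP) * (CP * F) = (D * F) / 2 by field; exact: lt0r_neq0.
by rewrite ler_pdivrMr // [_ * 2]mulrC.
Qed.

End Upwind.

Theorem mainTheorem4 (R : realType) (n l : nat)
  (y : 'I_n -> 'I_l -> R) (vol : 'I_n -> R) (gam : 'I_n -> 'I_n -> R)
  (nb : rel 'I_n) (bn : 'I_n -> 'I_n -> R) (D CP : R)
  (pi : 'I_n -> R) (rho : R -> 'I_n -> R)
  (* Setting U: distinct points, positive volumes, faces *)
  (hy : forall i j, y i = y j -> i = j)
  (hvol : forall i, 0 < vol i)
  (hnb_irr : forall i, ~~ nb i i)
  (hnb_sym : forall i j, nb i j = nb j i)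
  (hgam_sym : forall i j, gam i j = gam j i)
  (hgam_pos : forall i j, nb i j -> 0 < gam i j)
  (hgam_0 : forall i j, ~~ nb i j -> gam i j = 0)
  (hconn : forall i j, connect nb i j)
  (hbn : forall i j, nb i j -> bn j i = - bn i j)
  (hD : 0 < D)
  (* positive steady state *)
  (hpi : forall i, 0 < pi i)
  (hss : steady_state y vol gam nb bn D pi)
  (* Poincare inequality *)
  (hCP : 0 < CP)
  (hP : forall u : 'I_n -> R, \sum_i u i * pi i * vol i = 0 ->
     \sum_i u i ^+ 2 * pi i * vol i <=
       CP * \sum_i \sum_j gam i j * (pi i + pi j) / eucl_dist (y i) (y j)
                            * (u i - u j) ^+ 2)
  (* rho solves the upwind scheme for t >= 0 *)
  (hrho : forall t : R, 0 <= t -> forall i : 'I_n,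
     is_derive t (1 : R) (fun s : R => rho s i * vol i)
       (upwind_rhs y gam nb bn D (rho t) i))
  (hmass : \sum_i rho 0 i * vol i = \sum_i pi i * vol i) :
  forall t : R, 0 <= t ->
    \sum_i (rho t i - pi i) ^+ 2 / pi i * vol i <=
      expR (- (D / (2 * CP)) * t) * \sum_i (rho 0 i - pi i) ^+ 2 / pi i * vol i.
Proof.
have mass_const : forall s : R, 0 <= s -> \sum_i rho s i * vol i = \sum_i rho 0 i * vol i.
  apply: (deriv0_const (g := fun s => \sum_i rho s i * vol i)) => s s0.
  have := is_derive_fsum (h := fun i s => rho s i * vol i) (hrho s s0).
  by rewrite (upwind_mass_conservation y D hvol hnb_sym hgam_sym hbn).
move=> t t0; apply: (gronwall_exp
  (E := fun s => \sum_i (rho s i - pi i) ^+ 2 / pi i * vol i)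
  (dE := fun s => \sum_i 2 * (rho s i - pi i) / pi i
                   * upwind_rhs y gam nb bn D (rho s) i)) t0 => s s0.
  apply: is_derive_fsum => i.
  by apply: is_derive_chi2 (hrho s s0 i); exact: lt0r_neq0.
apply: (chi2_dissipation hvol hnb_irr hnb_sym hgam_sym hgam_pos hgam_0 hbn
          hD hpi hss hCP hP).
by rewrite mass_const.
Qed.
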